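(* Fix $n\in\mathbb N$, a noise level $\varepsilon\in[0,1)$, a horizon $K$ and a target risk level $\bar q\in[0,1]$. Let $G=(\mathcal V,\mathcal E)$ be a graph with $|\mathcal V|=n$ and minimum degree $\underline\Delta_G=\min_v|\mathcal N(v)|$. Under the Water-Filling Strategy $\psi^{wf}_{\bar q}$, $$\mathbb P(T_{IH}\ne T)\le1-\left(1-\frac1{\underline\Delta_G}\right)^K.$$
   Context: Model: finite connected undirected graph, neighborhoods $\mathcal N(v)$; goal $D$ uniform; fixed initial vertex; $B_t$ i.i.d. Bernoulli$(1-\varepsilon)$. The agent in state $X_t$ chooses $a_t\in\mathcal N(X_t)$; if $B_t=1$, $X_{t+1}=a_t$, else uniform on $\mathcal N(X_t)$. $T=\inf\{t\ge1:X_t=D\}$; if not reached by $K$, set $X_{K+1}=D$, $B_K=1$. Random-Step: $a_t$ uniform on $\mathcal N(X_t)$; Goal-Attempt: $a_t=D$ (only if $D\in\mathcal N(X_t)$). $T_{IH}=\inf\{t\ge1:$ Goal-Attempt at $t-1$ and $B_{t-1}=1\}$ ($\le K+1$). $L(t)=\sum_{s\le t}\mathbb I(X_s\in\mathcal N(D))$. Water-Filling Strategy $\psi^{wf}_{\bar q}$: $t^*=\lceil1/\bar q-\varepsilon/(1-\varepsilon)\rceil$ (integer argument assumed), $p_t=\frac{\bar q}{1-\varepsilon}(1-t\bar q)^{-1}$ for $0\le t<t^*-1$, else $1$; if $X_t\in\mathcal N(D)$ and $T_{IH}>t$, Goal-Attempt with probability $p_{L(t)}$, else Random-Step; otherwise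 Random-Step. *)

From HB Require Import structures.
From mathcomp Require Import all_boot all_order all_algebra.

Set Implicit Arguments.
Unset Strict Implicit.
Unset Printing Implicit Defensive.

Import Order.TTheory GRing.Theory Num.Theory.
Local Open Scope ring_scope.

Definition nbhd (V : finType) (e : rel V) (v : V) : {set V} := [set w | e v w].

(* minimum degree; the neutral element #|V| exceeds every degree *)
Definition min_degree (V : finType) (e : rel V) : nat :=
  \big[minn/#|V|]_(v : V) #|nbhd e v|.

Definition tstar (R : archiRealFieldType) (eps qbar : R) : int :=
  Num.ceil (qbar^-1 - eps / (1 - eps)).

Definition p_wf (R : archiRealFieldType) (eps qbar : R) (l : nat) : R :=
  if (l%:Z < tstar eps qbar - 1)%R
  then qbar / (1 - eps) * (1 - l%:R * qbar)^-1 else 1.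

(* One time step outcome: (goal-attempt flag g_t, action a_t,
   success bit B_t, next state X_{t+1}). *)
Definition step (V : finType) := (bool * V * bool * V)%type.
Definition st_g (V : finType) (s : step V) : bool := s.1.1.1.
Definition st_a (V : finType) (s : step V) : V := s.1.1.2.
Definition st_b (V : finType) (s : step V) : bool := s.1.2.
Definition st_y (V : finType) (s : step V) : V := s.2.

Section Model.
Variables (R : archiRealFieldType) (V : finType) (e : rel V) (x0 : V)
  (eps qbar : R) (K : nat).

Definition Xs (st : seq (step V)) (t : nat) : V :=
  nth x0 (x0 :: map (@st_y V) st) t.

Definition Lcount (D : V) (st : seq (step V)) (t : nat) : nat :=
  \sum_(s < t.+1) (Xs st s \in nbhd e D).

(* a successful goal attempt occurred at some time < t, i.e. T_IH <= t *)
Definition ih_before (st : seq (step V)) (t : nat) : bool :=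
  has (fun s => st_g s && st_b s) (take t st).

Definition unifN (x y : V) : R := (y \in nbhd e x)%:R / #|nbhd e x|%:R.

(* conditional probability of the step outcome s at time t given the history *)
Definition step_weight (D : V) (st : seq (step V)) (t : nat) (s : step V) : R :=
  let x := Xs st t in
  let elig := (x \in nbhd e D) && ~~ ih_before st t in
  let p := p_wf eps qbar (Lcount D st t) in
  let wg := if elig then (if st_g s then p else 1 - p)
            else (if st_g s then 0 else 1) in
  let wa := if st_g s then (st_a s == D)%:R else unifN x (st_a s) in
  let wb := if st_b s then 1 - eps else eps in
  let wy := if st_b s then (st_y s == st_a s)%:R else unifN x (st_y s) in
  wg * wa * wb * wy.

Definition traj_weight (D : V) (st : K.-tuple (step V)) : R :=
  \prod_(t < K) step_weight D st t (tnth st t).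

(* T = inf{t >= 1 : X_t = D}, = K+1 if D is not reached by time K *)
Definition hit_time (D : V) (st : seq (step V)) : nat :=
  (find (pred1 D) (map (@st_y V) st)).+1.

(* T_IH = inf{t >= 1 : goal attempt at t-1 and B_{t-1} = 1}, = K+1 if none *)
Definition ih_time (st : seq (step V)) : nat :=
  (find (fun s => st_g s && st_b s) st).+1.

Definition prob_IH_ne_T : R :=
  \sum_(D : V) \sum_(st : K.-tuple (step V))
    (#|V|%:R^-1 * traj_weight D st) * (ih_time st != hit_time D st)%:R.

End Model.

From HB Require Import structures.
From mathcomp Require Import all_boot all_order all_algebra.
From mathcomp Require Import ring lra.

Set Implicit Arguments.
Unset Strict Implicit.
Unset Printing Implicit Defensive.

Import Order.TTheory GRing.Theory Num.Theory.
Local Open Scope ring_scope.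

(* A successful goal attempt moves the walk onto D, so T_IH <> T forces some
   step at which entering D and a successful attempt disagree, i.e. the walk
   enters D by a uniform move to a neighbour.  Whatever the history, such a
   step has probability at most 1 / min_degree.  For a sequential
   sub-probability kernel in which every step is bad with probability at most
   delta, some step among K is bad with probability at most
   1 - (1 - delta)^K; this holds for every goal D, hence for D uniform. *)

Lemma big_tuple_cons (R : nmodType) (S : finType) n (F : n.+1.-tuple S -> R) :
  \sum_t F t = \sum_s \sum_(t : n.-tuple S) F [tuple of s :: t].
Proof.
rewrite pair_big /= (reindex (fun p : S * n.-tuple S => [tuple of p.1 :: p.2])) //=.
exists (fun t : n.+1.-tuple S => (thead t, [tuple of behead t])).
  by case=> s t _ /=; congr pair; apply/val_inj.
by move=> t _; rewrite [t in RHS]tuple_eta.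
Qed.

Lemma sumr_indicatorl (R : pzSemiRingType) (I : finType) (j : I) (F : I -> R) :
  \sum_i (i == j)%:R * F i = F j.
Proof.
rewrite (bigD1 j) //= eqxx mul1r big1 ?addr0 // => i /negbTE ->.
by rewrite mul0r.
Qed.

Lemma sumr_indicator (R : pzSemiRingType) (I : finType) (j : I) :
  \sum_i (i == j)%:R = 1 :> R.
Proof. by rewrite (bigD1 j) //= eqxx big1 ?addr0 // => i /negbTE ->. Qed.

Lemma sumr_indicatorr (R : comPzSemiRingType) (I : finType) (j : I) (F : I -> R) :
  \sum_i F i * (i == j)%:R = F j.
Proof. by under eq_bigr do rewrite mulrC; exact: sumr_indicatorl. Qed.

Lemma sumr_mul_le (R : numDomainType) (I : finType) (f G : I -> R) (c : R) :
  (forall i, 0 <= f i) -> \sum_i f i <= 1 -> 0 <= c -> (forall i, G i <= c) ->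
  \sum_i f i * G i <= c.
Proof.
move=> f_ge0 sum_f_le1 c_ge0 G_le.
apply: (@le_trans _ _ (\sum_i f i * c)).
  by apply: ler_sum => i _; rewrite ler_wpM2l.
by rewrite -mulr_suml ler_piMl.
Qed.

Section SubProbabilityKernel.
Variables (R : realFieldType) (S : finType) (w : seq S -> S -> R).
Hypotheses (w_ge0 : forall h s, 0 <= w h s) (sum_w_le1 : forall h, \sum_s w h s <= 1).

Definition path_weight (h : seq S) n (t : n.-tuple S) : R :=
  \prod_(i < n) w (h ++ take i t) (tnth t i).

Lemma path_weight_cons h n s (t : n.-tuple S) :
  path_weight h [tuple of s :: t] = w h s * path_weight (rcons h s) t.
Proof.
rewrite /path_weight big_ord_recl tnth0 /= cats0; congr (_ * _).
by apply: eq_bigr => i _; rewrite tnthS /= cat_rcons.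
Qed.

Lemma path_weight_ge0 h n (t : n.-tuple S) : 0 <= path_weight h t.
Proof. exact: prodr_ge0. Qed.

Lemma sum_path_weight_le1 n h : \sum_(t : n.-tuple S) path_weight h t <= 1.
Proof.
elim: n h => [|n IHn] h.
  under eq_bigr do rewrite /path_weight big_ord0.
  by rewrite sumr_const card_tuple.
rewrite big_tuple_cons.
under eq_bigr => s _ do under eq_bigr do rewrite path_weight_cons.
under eq_bigr do rewrite -mulr_sumr.
exact: sumr_mul_le.
Qed.

Variables (bad : pred S) (delta : R).
Hypotheses (delta_le1 : delta <= 1)
  (sum_w_bad_le : forall h, \sum_s w h s * (bad s)%:R <= delta).

Lemma sum_path_weight_has_le n h :
  \sum_(t : n.-tuple S) path_weight h t * (has bad t)%:R <= 1 - (1 - delta) ^+ n.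
Proof.
have delta_ge0 : 0 <= delta.
  by apply: le_trans (sum_w_bad_le [::]); apply: sumr_ge0 => s _; rewrite mulr_ge0.
elim: n h => [|n IHn] h.
  by rewrite subrr big1 // => t _; rewrite tuple0 mulr0.
set c := 1 - (1 - delta) ^+ n in IHn.
have avoid_ge0 : 0 <= (1 - delta) ^+ n by rewrite exprn_ge0 // subr_ge0.
have avoid_le1 : (1 - delta) ^+ n <= 1 by rewrite exprn_ile1 // ?subr_ge0 // lerBlDr lerDl.
rewrite big_tuple_cons.
apply: (@le_trans _ _ (\sum_s w h s * (c + (1 - c) * (bad s)%:R))).
  apply: ler_sum => s _.
  under eq_bigr do rewrite path_weight_cons -mulrA.
  rewrite -mulr_sumr ler_wpM2l //=.
  case: (bad s) => /=.
    under eq_bigr do rewrite mulr1.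
    by rewrite mulr1 addrC subrK sum_path_weight_le1.
  by rewrite mulr0 addr0.
rewrite (eq_bigr (fun s => c * w h s + (1 - c) * (w h s * (bad s)%:R))); last first.
  by move=> s _; ring.
rewrite big_split /= -!mulr_sumr exprS.
have sum_w_le : c * \sum_s w h s <= c by rewrite ler_piMr // subr_ge0.
have sum_bad_le : (1 - c) * \sum_s w h s * (bad s)%:R <= (1 - c) * delta.
  by rewrite ler_wpM2l // /c opprB addrC subrK.
move: sum_w_le sum_bad_le; rewrite /c; set a := (1 - delta) ^+ n; nra.
Qed.

End SubProbabilityKernel.

Section Graph.
Variables (V : finType) (e : rel V).

Lemma min_degree_le v : (min_degree e <= #|nbhd e v|)%N.
Proof. exact: (@bigmin_le _ nat). Qed.

Lemma card_nbhd_gt0 x y : (forall u v : V, connect e u v) -> e x y ->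
  forall v, (0 < #|nbhd e v|)%N.
Proof.
move=> connected_e exy v; have [->|nvx] := eqVneq v x.
  by apply/card_gt0P; exists y; rewrite inE.
case/connectP: (connected_e v x) => -[/= _ xv|z p /= /andP[evz _] _].
  by rewrite xv eqxx in nvx.
by apply/card_gt0P; exists z; rewrite inE.
Qed.

Lemma min_degree_gt0 x y : (forall u v : V, connect e u v) -> e x y ->
  (0 < min_degree e)%N.
Proof.
move=> connected_e exy; apply/(@bigmin_gtP _ nat); split.
  by apply/card_gt0P; exists x.
by move=> v _; exact: card_nbhd_gt0 connected_e exy v.
Qed.

Variable R : archiRealFieldType.

Lemma unifN_ge0 x y : 0 <= unifN R e x y.
Proof. by rewrite divr_ge0. Qed.

Lemma sum_unifN_le1 x : \sum_y unifN R e x y <= 1.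
Proof.
rewrite /unifN -mulr_suml.
rewrite (eq_bigr (fun y => if y \in nbhd e x then 1 else 0)); last by move=> y _; case: ifP.
rewrite -big_mkcond sumr_const.
have [->|deg_gt0] := posnP #|nbhd e x|; first by rewrite mulr0n mul0r ler01.
by rewrite divff ?pnatr_eq0 -?lt0n.
Qed.

Lemma inv_min_degree_le1 : (min_degree e)%:R^-1 <= 1 :> R.
Proof.
have [->|deg_gt0] := posnP (min_degree e); first by rewrite invr0 ler01.
by rewrite invf_le1 ?ltr0n // ler1n.
Qed.

Lemma unifN_le_min_degree x y : (forall u v : V, connect e u v) ->
  unifN R e x y <= (min_degree e)%:R^-1.
Proof.
move=> connected_e; rewrite /unifN.
case: (boolP (y \in nbhd e x)) => [|_]; last by rewrite mul0r invr_ge0 ler0n.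
rewrite inE => exy.
rewrite mul1r lef_pV2 ?posrE ?ltr0n ?ler_nat ?min_degree_le //.
- exact: card_nbhd_gt0 connected_e exy x.
- exact: min_degree_gt0 connected_e exy.
Qed.

End Graph.

Section WaterFilling.
Variables (R : archiRealFieldType) (V : finType) (e : rel V) (x0 : V) (eps qbar : R).

Lemma Xs_take (st : seq (step V)) t s : (s <= t)%N ->
  Xs x0 (take t st) s = Xs x0 st s.
Proof. by rewrite /Xs; case: s => [|s] //= s_lt; rewrite map_take nth_take. Qed.

Lemma Lcount_take D (st : seq (step V)) t :
  Lcount e x0 D (take t st) t = Lcount e x0 D st t.
Proof. by apply: eq_bigr => s _; rewrite Xs_take // -ltnS. Qed.

Lemma step_weight_take D (st : seq (step V)) t s :
  step_weight e x0 eps qbar D (take t st) t s = step_weight e x0 eps qbar D st t s.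
Proof. by rewrite /step_weight Xs_take // Lcount_take /ih_before take_takel. Qed.

Hypotheses (eps_ge0 : 0 <= eps) (eps_lt1 : eps < 1) (qbar_ge0 : 0 <= qbar).

Lemma p_wf_in01 l : 0 <= p_wf eps qbar l <= 1.
Proof.
rewrite /p_wf; case: ifP => [|_]; last by rewrite ler01 lexx.
rewrite /tstar ltrBrDr ceil_gt_int rmorphD /= rmorph1 => l_lt.
have [<-|qbar_neq0] := eqVneq 0 qbar; first by rewrite !mul0r lexx ler01.
have qbar_gt0 : 0 < qbar by rewrite lt_def eq_sym qbar_neq0.
have eps_ne1 : 1 - eps != 0 by rewrite subr_eq0 eq_sym lt_eqF.
have odds_ge0 : 0 <= eps / (1 - eps) by rewrite divr_ge0 // subr_ge0 ltW.
have scaled : (l%:R + 1) * qbar < (qbar^-1 - eps / (1 - eps)) * qbar.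
  by rewrite ltr_pM2r.
rewrite mulrBl mulVf ?gt_eqF // mulrDl mul1r in scaled.
have attempt_split : qbar / (1 - eps) = qbar + eps / (1 - eps) * qbar by field.
have attempt_ge0 : 0 <= qbar / (1 - eps) by rewrite divr_ge0 // subr_ge0 ltW.
have attempt_lt : qbar / (1 - eps) < 1 - l%:R * qbar.
  move: scaled; rewrite attempt_split.
  set lq := l%:R * qbar; set oq := eps / (1 - eps) * qbar; lra.
have rest_gt0 : 0 < 1 - l%:R * qbar by apply: le_lt_trans attempt_lt.
by rewrite divr_ge0 ?(ltW rest_gt0) //= ler_pdivrMr // mul1r ltW.
Qed.

Lemma sum_step (F : step V -> R) :
  \sum_s F s = \sum_g \sum_a \sum_b \sum_y F (g, a, b, y).
Proof. by rewrite !pair_bigA; apply: eq_bigr => -[[[g a] b] y]. Qed.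

(* An exclusive or, so that T_IH <> T implies a mismatching step on every
   trajectory, not only on those of positive weight. *)
Definition mismatch (D : V) (s : step V) : bool :=
  (st_y s == D) (+) (st_g s && st_b s).

Section OneStep.
Variables (D : V) (st : seq (step V)) (t : nat).

Let x := Xs x0 st t.
Let p := p_wf eps qbar (Lcount e x0 D st t).
Let eligible := (x \in nbhd e D) && ~~ ih_before st t.
Let goal_w (g : bool) := if eligible then (if g then p else 1 - p) else (if g then 0 else 1).
Let action_w (g : bool) (a : V) := if g then (a == D)%:R else unifN R e x a.
Let success_w (b : bool) := if b then 1 - eps else eps.
Let move_w (b : bool) (a y : V) := if b then (y == a)%:R else unifN R e x y.

Let p_ge0 : 0 <= p. Proof. by case/andP: (p_wf_in01 (Lcount e x0 D st t)). Qed.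
Let p_le1 : p <= 1. Proof. by case/andP: (p_wf_in01 (Lcount e x0 D st t)). Qed.

Let goal_w_ge0 g : 0 <= goal_w g.
Proof. by rewrite /goal_w; case: g; case: eligible; rewrite ?subr_ge0 ?ler01. Qed.

Let sum_goal_w : \sum_g goal_w g = 1.
Proof. by rewrite big_bool /goal_w; case: ifP => _ /=; rewrite ?add0r // addrC subrK. Qed.

Let action_w_ge0 g a : 0 <= action_w g a.
Proof. by case: g; rewrite /action_w ?unifN_ge0. Qed.

Let sum_action_w_le1 g : \sum_a action_w g a <= 1.
Proof.
case: g; last exact: sum_unifN_le1.
by rewrite /action_w /= sumr_indicator.
Qed.

Let success_w_ge0 b : 0 <= success_w b.
Proof. by case: b; rewrite /success_w // subr_ge0 ltW. Qed.

Let sum_success_w : \sum_b success_w b = 1.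
Proof. by rewrite big_bool /= subrK. Qed.

Let move_w_ge0 b a y : 0 <= move_w b a y.
Proof. by case: b; rewrite /move_w ?unifN_ge0. Qed.

Let sum_move_w_le1 b a : \sum_y move_w b a y <= 1.
Proof.
case: b; last exact: sum_unifN_le1.
by rewrite /move_w /= sumr_indicator.
Qed.

Let step_weightE g a b y : step_weight e x0 eps qbar D st t (g, a, b, y) =
  goal_w g * action_w g a * success_w b * move_w b a y.
Proof. by []. Qed.

Let sum_step_weight (F : step V -> R) :
  \sum_s step_weight e x0 eps qbar D st t s * F s =
  \sum_g goal_w g * \sum_a action_w g a * \sum_b success_w b *
    \sum_y move_w b a y * F (g, a, b, y).
Proof.
rewrite sum_step; apply: eq_bigr => g _; rewrite mulr_sumr.
apply: eq_bigr => a _; rewrite !mulr_sumr; apply: eq_bigr => b _.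
by rewrite !mulr_sumr; apply: eq_bigr => y _; rewrite step_weightE !mulrA.
Qed.

Lemma step_weight_ge0 s : 0 <= step_weight e x0 eps qbar D st t s.
Proof. by case: s => [[[g a] b] y]; rewrite step_weightE !mulr_ge0. Qed.

Lemma sum_step_weight_le1 : \sum_s step_weight e x0 eps qbar D st t s <= 1.
Proof.
under eq_bigr do rewrite -[step_weight _ _ _ _ _ _ _ _]mulr1.
rewrite sum_step_weight; apply: sumr_mul_le => // [|g]; first by rewrite sum_goal_w.
apply: sumr_mul_le => // a; apply: sumr_mul_le => // [|b]; first by rewrite sum_success_w.
by under eq_bigr do rewrite mulr1.
Qed.

Lemma sum_step_weight_mismatch_le :
  \sum_s step_weight e x0 eps qbar D st t s * (mismatch D s)%:R <= unifN R e x D.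
Proof.
have u_ge0 : 0 <= unifN R e x D by exact: unifN_ge0.
rewrite sum_step_weight; apply: sumr_mul_le => // [|[]]; first by rewrite sum_goal_w.
  rewrite sumr_indicatorl big_bool /mismatch /st_y /st_g /st_b /=.
  rewrite big1 => [|y _]; last by case: (y == D); rewrite ?mulr0 ?mul0r.
  under eq_bigr do rewrite addbF.
  by rewrite sumr_indicatorr mulr0 add0r ler_piMl // ltW.
have inner a : \sum_b success_w b * \sum_y move_w b a y * (mismatch D (false, a, b, y))%:R
    = (1 - eps) * (a == D)%:R + eps * unifN R e x D.
  under eq_bigr do under eq_bigr do rewrite /mismatch /st_g andFb addbF.
  by rewrite big_bool /= sumr_indicatorl sumr_indicatorr.
rewrite (eq_bigr (fun a => (1 - eps) * (unifN R e x a * (a == D)%:R) +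
                          unifN R e x a * (eps * unifN R e x D))) => [|a _]; last first.
  by rewrite inner mulrDr mulrCA.
rewrite big_split /= -mulr_sumr sumr_indicatorr -mulr_suml.
have : (\sum_a unifN R e x a) * (eps * unifN R e x D) <= eps * unifN R e x D.
  by apply: ler_piMl; [exact: mulr_ge0 | exact: sum_unifN_le1].
set S := _ * (eps * _); set u := unifN R e x D; lra.
Qed.

End OneStep.

Lemma mismatch_of_ih_time_neq D (st : seq (step V)) :
  ih_time st != hit_time D st -> has (mismatch D) st.
Proof.
elim: st => [|s st IHst] //=; rewrite /ih_time /hit_time /mismatch /=.
by case: (_ && _); case: (_ == D).
Qed.

Definition step_kernel D (h : seq (step V)) : step V -> R :=
  step_weight e x0 eps qbar D h (size h).

Lemma traj_weightE K D (st : K.-tuple (step V)) :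
  traj_weight e x0 eps qbar D st = path_weight (step_kernel D) [::] st.
Proof.
apply: eq_bigr => i _.
by rewrite cat0s /step_kernel size_takel ?size_tuple 1?ltnW // step_weight_take.
Qed.

Lemma sum_traj_weight_mismatch_le K D : (forall u v : V, connect e u v) ->
  \sum_(st : K.-tuple (step V))
      traj_weight e x0 eps qbar D st * (ih_time st != hit_time D st)%:R
    <= 1 - (1 - (min_degree e)%:R^-1) ^+ K.
Proof.
move=> connected_e.
have kernel_ge0 h s : 0 <= step_kernel D h s by exact: step_weight_ge0.
have kernel_sum_le1 h : \sum_s step_kernel D h s <= 1 by exact: sum_step_weight_le1.
have kernel_mismatch_le h :
    \sum_s step_kernel D h s * (mismatch D s)%:R <= (min_degree e)%:R^-1.
  apply: le_trans (sum_step_weight_mismatch_le _ _ _) _.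
  exact: unifN_le_min_degree.
apply: le_trans (sum_path_weight_has_le kernel_ge0 kernel_sum_le1
  (inv_min_degree_le1 e R) kernel_mismatch_le K [::]).
apply: ler_sum => st _; rewrite traj_weightE ler_wpM2l ?path_weight_ge0 // ler_nat.
by case: (boolP (_ != _)) => // /mismatch_of_ih_time_neq ->.
Qed.

End WaterFilling.

Theorem lemma5 (R : archiRealFieldType) (V : finType) (e : rel V) (x0 : V)
  (eps qbar : R) (K : nat) :
  symmetric e -> irreflexive e -> (forall x y : V, connect e x y) ->
  0 <= eps < 1 -> 0 <= qbar <= 1 ->
  (qbar^-1 - eps / (1 - eps)) \is a Num.int ->
  prob_IH_ne_T e x0 eps qbar K <= 1 - (1 - (min_degree e)%:R^-1) ^+ K.
Proof.
move=> _ _ connected_e /andP[eps_ge0 eps_lt1] /andP[qbar_ge0 _] _.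
have card_V_gt0 : (0 < #|V|)%N by apply/card_gt0P; exists x0.
rewrite /prob_IH_ne_T.
under eq_bigr do under eq_bigr do rewrite -mulrA.
under eq_bigr do rewrite -mulr_sumr.
rewrite -mulr_sumr ler_pdivrMl ?ltr0n //.
rewrite mulr_natl -sumr_const.
apply: ler_sum => D _.
exact: sum_traj_weight_mismatch_le.
Qed.
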